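(* We have $\Theta\pi(U)\Theta=\pi'(U)$ and $\Theta\pi(a(\mathbb{K}))\Theta=\pi'(a(-\mathbb{K}))$ for every $a\in c(\mathbb{Z})$. Consequently there is an anti-homomorphism $\theta:A\to A$ (with $\theta(U)=U$ and $\theta(a(\mathbb{K}))=a(-\mathbb{K})$) such that $\Theta\pi(a)\Theta=\pi'(\theta(a))$ for all $a\in A$.
   Context: Let $\{E_k\}$ be the canonical basis of $\ell^2(\mathbb{Z})$, $UE_k=E_{k+1}$, $\mathbb{K}E_k=kE_k$, $a(\mathbb{K})E_k=a(k)E_k$. $c(\mathbb{Z})$ is the set of $a:\mathbb{Z}\to\mathbb{C}$ with finite limits at $+\infty$ and at $-\infty$. $A$ is the C$^*$-algebra generated by $U$ and all $a(\mathbb{K})$, $a\in c(\mathbb{Z})$. $\mathcal{H}$ is the Hilbert space of Hilbert–Schmidt operators on $\ell^2(\mathbb{Z})$ with $\langle f,g\rangle=\mathrm{tr}(f^*g)$, each $f$ written uniquely $f=\sum_nU^nf_n(\mathbb{K})$. For $a\in A$, $\pi(a)f=af$ and $\pi'(a)f=fa$ (operator products). $\Theta f=\sum_nU^nf_n(-\mathbb{K}-n)$. *)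

From HB Require Import structures.
From mathcomp Require Import all_boot all_order all_algebra.
From mathcomp Require Import complex.
From mathcomp Require Import boolp classical_sets reals.
Set Implicit Arguments. Unset Strict Implicit. Unset Printing Implicit Defensive.
Import Order.TTheory GRing.Theory Num.Theory.
Local Open Scope ring_scope.
Local Open Scope complex_scope.

Section Defs.
Variable R : realType.
Local Notation C := R[i].

(* A (possibly unbounded) operator on l^2(Z) is given by its matrix in the
   canonical basis {E_k}: T i j = <E_i, T E_j>. *)
Definition mat := int -> int -> C.

Definition wsum (N : nat) (u : int -> C) : C :=
  \sum_(0 <= m < (N.*2).+1) u (m%:Z - N%:Z).

Definition cvg_zsum (u : int -> C) (z : C) : Prop :=
  forall e : R, 0 < e -> exists N0 : nat, forall N : nat, (N0 <= N)%N ->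
    `|wsum N u - z| < e%:C.

(* the sum of a series over Z (0 if it does not converge) *)
Definition zsum (u : int -> C) : C := xget 0 [set z | cvg_zsum u z].

Definition mmul (S T : mat) : mat := fun i j => zsum (fun k => S i k * T k j).

Definition madd (S T : mat) : mat := fun i j => S i j + T i j.
Definition mscale (c : C) (S : mat) : mat := fun i j => c * S i j.
Definition madj (S : mat) : mat := fun i j => (S j i)^*.

(* operator norm bound: ||T x|| <= e ||x|| for all finitely supported x *)
Definition normle (T : mat) (e : R) : Prop :=
  forall (N K : nat) (x : int -> C),
    wsum K (fun i => `|wsum N (fun j => T i j * x j)| ^+ 2)
      <= (e ^+ 2)%:C * wsum N (fun j => `|x j| ^+ 2).

Definition bounded (T : mat) : Prop := exists M : R, normle T M.

Definition Ushift : mat := fun i j => if i == j + 1 then 1 else 0.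
Definition mulop (a : int -> C) : mat := fun i j => if i == j then a i else 0.

Definition cZ (a : int -> C) : Prop :=
  exists lp lm : C, forall e : R, 0 < e -> exists N : nat, forall k : int,
    (N%:Z <= k -> `|a k - lp| < e%:C) /\ (k <= - N%:Z -> `|a k - lm| < e%:C).

Definition cstar_closed (P : set mat) : Prop :=
  [/\ forall S T, P S -> P T -> P (madd S T),
      forall c S, P S -> P (mscale c S),
      forall S T, P S -> P T -> P (mmul S T),
      forall S, P S -> P (madj S) &
      forall T, bounded T ->
        (forall e : R, 0 < e -> exists S, P S /\ normle (madd T (mscale (-1) S)) e) ->
        P T].

Definition algA : set mat := fun T =>
  forall P : set mat, cstar_closed P -> P Ushift ->
    (forall a, cZ a -> P (mulop a)) -> P T.

Definition HS (f : mat) : Prop :=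
  exists M : R, forall N : nat,
    wsum N (fun i => wsum N (fun j => `|f i j| ^+ 2)) <= M%:C.

Definition piL (a : mat) (f : mat) : mat := mmul a f.
Definition piR (a : mat) (f : mat) : mat := mmul f a.

(* f = sum_n U^n f_n(K): U^n f_n(K) E_k = f_n(k) E_{k+n}, so f_n(k) = f (k+n) k *)
Definition fcoef (f : mat) (n k : int) : C := f (k + n) k.
(* the operator sum_n U^n g_n(K) *)
Definition ofcoef (g : int -> int -> C) : mat := fun i j => g (i - j) j.
(* Theta f = sum_n U^n f_n(-K-n) *)
Definition Theta (f : mat) : mat := ofcoef (fun n k => fcoef f n (- k - n)).

End Defs.

(* In matrix terms (Theta f) i j = f (-j) (-i): Theta is the transpose followed
   by conjugation with the flip J E_k = E_{-k}.  It is therefore an involutive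
   anti-automorphism of the matrix calculus, fixing U and sending a(K) to
   a(-K), and Theta (a f) = Theta f * Theta a.  So theta := Theta works, and
   the only analytic point is that A is Theta-stable: Theta preserves the
   C*-operations and operator-norm bounds, because a transpose has the same
   norm as the matrix (by duality) and J is unitary. *)

From HB Require Import structures.
From mathcomp Require Import all_boot all_order all_algebra.
From mathcomp Require Import complex.
From mathcomp Require Import boolp classical_sets reals.
From mathcomp Require Import zify ring lra.
Set Implicit Arguments. Unset Strict Implicit. Unset Printing Implicit Defensive.
Import Order.TTheory GRing.Theory Num.Theory.
Local Open Scope ring_scope.
Local Open Scope complex_scope.

Lemma quadratic_bound (F : realFieldType) (s p x z k : F) :
  0 <= k -> 0 <= x -> s <= p -> z <= k * s ->
  (forall t, 0 < t -> 2 * t * p <= t ^+ 2 * x + z) -> s <= k * x.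
Proof.
move=> k0 x0 sp zks quad.
have [k_eq0|kgt0] := eqVneq k 0.
  move: zks; rewrite k_eq0 !mul0r => zks; apply: le_trans sp _.
  rewrite leNgt; apply/negP => p0.
  have x1 : 0 < x + 1 by rewrite ltr_pwDr.
  have t0 : 0 < p / (x + 1) by rewrite divr_gt0.
  have := quad _ t0; have : p / (x + 1) * (x + 1) = p by rewrite mulfVK // gt_eqF.
  move: t0; set t := p / (x + 1) => t0 tx.
  have -> : t ^+ 2 * x = t * p - t ^+ 2 by rewrite -tx; ring.
  have : 0 < t * p by rewrite mulr_gt0.
  nra.
have {}kgt0 : 0 < k by rewrite lt_def kgt0.
have := quad k kgt0; nra.
Qed.

Section ThetaAlgebra.
Variable R : realType.
Local Notation C := R[i].

Lemma ThetaE (f : mat R) i j : Theta f i j = f (- j) (- i).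
Proof. by rewrite /Theta /ofcoef /fcoef; congr f; lia. Qed.

Lemma wsumN N (u : int -> C) : wsum N (fun k => u (- k)) = wsum N u.
Proof.
rewrite /wsum big_nat_rev /=; apply: eq_big_nat => m /andP[_ hm].
by congr u; lia.
Qed.

Lemma wsum_exchange N K (F : int -> int -> C) :
  wsum K (fun i => wsum N (F i)) = wsum N (fun j => wsum K (F^~ j)).
Proof. exact: exchange_big. Qed.

Lemma zsumN (u : int -> C) : zsum (fun k => u (- k)) = zsum u.
Proof.
rewrite /zsum; congr xget; apply/seteqP; split => z uz e e0;
  have [N0 HN] := uz e e0; exists N0 => N hN; have := HN N hN;
  by rewrite wsumN.
Qed.

Lemma ThetaK : involutive (@Theta R).
Proof. by move=> f; apply/funext => i; apply/funext => j; rewrite !ThetaE !opprK. Qed.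

Lemma Theta_mmul (S T : mat R) : Theta (mmul S T) = mmul (Theta T) (Theta S).
Proof.
apply/funext => i; apply/funext => j; rewrite ThetaE /mmul.
rewrite -(zsumN (fun k => Theta T i k * Theta S k j)).
by congr zsum; apply/funext => k; rewrite !ThetaE !opprK mulrC.
Qed.

Lemma Theta_piL (T f : mat R) : Theta (piL T (Theta f)) = piR (Theta T) f.
Proof. by rewrite /piL /piR Theta_mmul ThetaK. Qed.

Lemma Theta_madd (S T : mat R) : Theta (madd S T) = madd (Theta S) (Theta T).
Proof. by apply/funext => i; apply/funext => j; rewrite /madd !ThetaE. Qed.

Lemma Theta_mscale c (S : mat R) : Theta (mscale c S) = mscale c (Theta S).
Proof. by apply/funext => i; apply/funext => j; rewrite /mscale !ThetaE. Qed.

Lemma Theta_madj (S : mat R) : Theta (madj S) = madj (Theta S).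
Proof. by apply/funext => i; apply/funext => j; rewrite /madj !ThetaE. Qed.

Lemma Theta_Ushift : Theta (Ushift R) = Ushift R.
Proof.
apply/funext => i; apply/funext => j; rewrite ThetaE /Ushift.
by have -> : (- j == - i + 1) = (i == j + 1) by apply/eqP/eqP; lia.
Qed.

Lemma Theta_mulop (a : int -> C) : Theta (mulop a) = mulop (fun k => a (- k)).
Proof.
apply/funext => i; apply/funext => j; rewrite ThetaE /mulop.
have [->|ij] := eqVneq i j; first by rewrite eqxx.
by have -> : (- j == - i) = false by apply/eqP; lia.
Qed.

End ThetaAlgebra.

Section ThetaNorm.
Variable R : realType.
Local Notation C := R[i].

Lemma normle_flip (X : mat R) e :
  normle X e -> normle (fun i j => X (- i) (- j)) e.
Proof.
move=> hX N K x; have := hX N K (fun j => x (- j)).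
rewrite (wsumN N (fun j => `|x j| ^+ 2)); congr (_ <= _).
rewrite -(wsumN K); apply: eq_bigr => k _; congr (`|_| ^+ 2).
by rewrite -(wsumN N); apply: eq_bigr => j _; rewrite !opprK.
Qed.

Lemma amgm_norm (t : R) (a b : C) :
  (2 * t)%:C * (`|a| * `|b|) <= (t ^+ 2)%:C * `|a| ^+ 2 + `|b| ^+ 2.
Proof.
rewrite !normc_def; set ra := Num.sqrt _; set rb := Num.sqrt _.
rewrite -!rmorphXn -!rmorphM -rmorphD lecR.
have := sqr_ge0 (t * ra - rb); nra.
Qed.

Lemma ge0_complex_real (c : C) : 0 <= c -> exists2 r : R, 0 <= r & c = r%:C.
Proof.
move=> c0; have /ger0_real/complex_realP[r cr] := c0.
by exists r => //; rewrite -ler0c -cr.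
Qed.

Lemma normle_transpose (X : mat R) e :
  normle X e -> normle (fun i j => X j i) e.
Proof.
(* With y := X^T x and z := X (conj y), |y|^2 = <x, z> and |z| <= e |y|;
   AM-GM with a free weight t replaces Cauchy-Schwarz in bounding <x, z>. *)
move=> hX N K x.
pose y i := wsum N (fun j => X j i * x j).
pose z j := wsum K (fun i => X j i * (y i)^*).
pose S := wsum K (fun i => `|y i| ^+ 2).
pose Xs := wsum N (fun j => `|x j| ^+ 2).
pose Z := wsum N (fun j => `|z j| ^+ 2).
pose P := wsum N (fun j => `|x j| * `|z j|).
change (S <= (e ^+ 2)%:C * Xs).
have S_dual : S = wsum N (fun j => x j * z j).
  transitivity (wsum K (fun i => wsum N (fun j => x j * (X j i * (y i)^*)))).
    apply: eq_bigr => m _; rewrite sqr_normc mulr_suml.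
    by apply: eq_bigr => n _; rewrite mulrCA mulrA.
  by rewrite wsum_exchange; apply: eq_bigr => n _; rewrite /z /wsum mulr_sumr.
have ZS : Z <= (e ^+ 2)%:C * S.
  have := hX K N (fun i => (y i)^*); congr (_ <= _ * _).
  by apply: eq_bigr => m _; rewrite normcJ.
have S0 : 0 <= S by apply: sumr_ge0 => m _; exact: exprn_ge0.
have X0 : 0 <= Xs by apply: sumr_ge0 => m _; exact: exprn_ge0.
have Z0 : 0 <= Z by apply: sumr_ge0 => m _; exact: exprn_ge0.
have P0 : 0 <= P by apply: sumr_ge0 => m _; exact: mulr_ge0.
have SP : S <= P.
  rewrite -(ger0_norm S0) S_dual; apply: le_trans (ler_norm_sum _ _ _) _.
  by apply: ler_sum => m _; rewrite normrM.
have PXZ t : (2 * t)%:C * P <= (t ^+ 2)%:C * Xs + Z.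
  rewrite /P /Xs /Z /wsum !mulr_sumr -big_split /=.
  by apply: ler_sum => m _; exact: amgm_norm.
move: ZS SP PXZ.
have [s _ ->] := ge0_complex_real S0; have [xs xs0 ->] := ge0_complex_real X0.
have [zz _ ->] := ge0_complex_real Z0; have [p _ ->] := ge0_complex_real P0.
rewrite -!rmorphM !lecR => ZS SP PXZ.
apply: quadratic_bound SP ZS _ => // [|t _]; first exact: sqr_ge0.
by have := PXZ t; rewrite -!rmorphM -rmorphD lecR.
Qed.

End ThetaNorm.

Section ThetaStable.
Variable R : realType.

Lemma normle_Theta (X : mat R) e : normle X e -> normle (Theta X) e.
Proof.
move=> /normle_transpose/normle_flip.
by congr normle; apply/funext => i; apply/funext => j; rewrite ThetaE.
Qed.

Lemma cstar_closed_Theta (P : set (mat R)) :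
  cstar_closed P -> cstar_closed (P \o @Theta R).
Proof.
case=> addP scaleP mulP adjP closedP; split => /=.
- by move=> S T PS PT; rewrite Theta_madd; exact: addP.
- by move=> c S PS; rewrite Theta_mscale; exact: scaleP.
- by move=> S T PS PT; rewrite Theta_mmul; exact: mulP.
- by move=> S PS; rewrite Theta_madj; exact: adjP.
move=> T [M TM] approx; apply: closedP; first by exists M; exact: normle_Theta.
move=> e e0; have [S [PS TS]] := approx e e0; exists (Theta S); split => //.
by rewrite -Theta_mscale -Theta_madd; exact: normle_Theta.
Qed.

Lemma cZN (a : int -> R[i]) : cZ a -> cZ (fun k => a (- k)).
Proof.
case=> lp [lm alim]; exists lm, lp => e e0; have [N aN] := alim e e0.
exists N => k; have [ap am] := aN (- k).
by split => hk; [apply: am | apply: ap]; lia.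
Qed.

Lemma algA_Theta (T : mat R) : algA T -> algA (Theta T).
Proof.
move=> AT P cP PU Pmul; apply: (AT (P \o @Theta R)).
- exact: cstar_closed_Theta.
- by rewrite /= Theta_Ushift.
- by move=> a /cZN ca; rewrite /= Theta_mulop; exact: Pmul.
Qed.

End ThetaStable.

Theorem mainTheorem6 (R : realType) :
  (forall f : mat R, HS f -> Theta (piL (Ushift R) (Theta f)) = piR (Ushift R) f) /\
  (forall a : int -> R[i], cZ a -> forall f : mat R, HS f ->
     Theta (piL (mulop a) (Theta f)) = piR (mulop (fun k => a (- k))) f) /\
  (exists theta : mat R -> mat R,
     [/\ forall T, algA T -> algA (theta T),
         theta (Ushift R) = Ushift R &
         forall a : int -> R[i], cZ a -> theta (mulop a) = mulop (fun k => a (- k))] /\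
     [/\ forall S T, algA S -> algA T -> theta (madd S T) = madd (theta S) (theta T),
         forall (c : R[i]) S, algA S -> theta (mscale c S) = mscale c (theta S) &
         forall S T, algA S -> algA T -> theta (mmul S T) = mmul (theta T) (theta S)] /\
     (forall T, algA T -> forall f : mat R, HS f ->
           Theta (piL T (Theta f)) = piR (theta T) f)).
Proof.
split; first by move=> f _; rewrite Theta_piL Theta_Ushift.
split; first by move=> a _ f _; rewrite Theta_piL Theta_mulop.
exists (@Theta R); split; [split | split; [split |]].
- exact: algA_Theta.
- exact: Theta_Ushift.
- by move=> a _; exact: Theta_mulop.
- by move=> S T _ _; exact: Theta_madd.
- by move=> c S _; exact: Theta_mscale.
- by move=> S T _ _; exact: Theta_mmul.
- by move=> T _ f _; exact: Theta_piL.
Qed.
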